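(* Let $\lambda\in Y^{++}$, $\nu\in Y^+$ and $u\in W^v$. Then the set $\{\mu\in W^v\lambda:\nu\in R_u(\mu)\}$ is finite.
   Context: $I$ finite, $A$ a generalized Cartan matrix, $Y$ a free $\mathbb Z$-module of finite rank with free family $(\alpha_i^\vee)_{i\in I}$ and $\alpha_i\in\mathrm{Hom}(Y,\mathbb Z)$ with $\alpha_j(\alpha_i^\vee)=a_{i,j}$; $\mathbb A=Y\otimes\mathbb R$; $r_i(v)=v-\alpha_i(v)\alpha_i^\vee$; $W^v=\langle r_i\rangle$; $Q^\vee=\bigoplus\mathbb Z\alpha_i^\vee$; $C^v_f=\{\alpha_i>0\ \forall i\}$, $\mathcal T=\bigcup_w w\overline{C^v_f}$, $Y^+=Y\cap\mathcal T$, $Y^{++}=Y\cap\overline{C^v_f}$. For $E\subset Y$, $R_i(E)=\mathrm{conv}(E\cup r_i(E))\cap(E+Q^\vee)$; for $w\in W^v$, $\mu\in Y$, $R_w(\mu)=\bigcup R_{i_1}(\cdots R_{i_k}(\{\mu\})\cdots)$ over all reduced expressions $w=r_{i_1}\cdots r_{i_k}$. *)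

From HB Require Import structures.
From mathcomp Require Import all_boot all_order all_algebra.
Set Implicit Arguments. Unset Strict Implicit. Unset Printing Implicit Defensive.
Import Order.TTheory GRing.Theory Num.Theory.
Local Open Scope ring_scope.

(* Y = Z^n realised as 'rV[int]_n; Hom(Y,Z) realised as 'rV[int]_n via the
   standard pairing; A = Y (x) R realised as 'rV[R]_n for a real field R. *)

Definition dotv (R : comNzRingType) (n : nat) (x y : 'rV[R]_n) : R :=
  \sum_(k < n) x 0 k * y 0 k.

Definition emb (R : realFieldType) (n : nat) (y : 'rV[int]_n) : 'rV[R]_n :=
  map_mx (fun z : int => z%:~R) y.

Definition is_GCM (I : finType) (a : I -> I -> int) : Prop :=
  (forall i, a i i = 2) /\
  (forall i j, i != j -> a i j <= 0) /\
  (forall i j, a i j = 0 <-> a j i = 0).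

Definition free_family (I : finType) (n : nat) (av : I -> 'rV[int]_n) : Prop :=
  forall c : I -> int, \sum_i c i *: av i = 0 -> forall i, c i = 0.

Section KM.
Variables (R : realFieldType) (I : finType) (n : nat) (al av : I -> 'rV[int]_n).

Definition rY (i : I) (y : 'rV[int]_n) : 'rV[int]_n :=
  y - dotv (al i) y *: av i.
Definition rA (i : I) (v : 'rV[R]_n) : 'rV[R]_n :=
  v - dotv (emb R (al i)) v *: emb R (av i).

(* word [:: i1; ...; ik] acts as r_{i1} o ... o r_{ik} *)
Definition actY (s : seq I) (y : 'rV[int]_n) := foldr rY y s.
Definition actA (s : seq I) (v : 'rV[R]_n) := foldr rA v s.

(* s is a reduced expression of the element of W^v (in GL(A)) represented by s0 *)
Definition reduced_expr (s s0 : seq I) : Prop :=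
  (forall v, actA s v = actA s0 v) /\
  (forall s', (forall v, actA s' v = actA s0 v) -> (size s <= size s')%N).

Definition inQv (y : 'rV[int]_n) : Prop :=
  exists c : I -> int, y = \sum_i c i *: av i.

Definition conv (S : 'rV[R]_n -> Prop) (x : 'rV[R]_n) : Prop :=
  exists (m : nat) (p : 'I_m -> 'rV[R]_n) (w : 'I_m -> R),
    (forall k, S (p k)) /\ (forall k, 0 <= w k) /\
    \sum_k w k = 1 /\ x = \sum_k w k *: p k.

Definition Ri (i : I) (E : 'rV[int]_n -> Prop) (y : 'rV[int]_n) : Prop :=
  conv (fun x => exists e, (E e \/ exists e', E e' /\ e = rY i e') /\ x = emb R e)
       (emb R y) /\
  exists e q, E e /\ inQv q /\ y = e + q.

Definition Rword (s : seq I) (E : 'rV[int]_n -> Prop) := foldr Ri E s.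

Definition Rw (s0 : seq I) (mu y : 'rV[int]_n) : Prop :=
  exists s, reduced_expr s s0 /\ Rword s (fun z => z = mu) y.

(* Y^{++} = Y n closure(C^v_f) *)
Definition Ypp (y : 'rV[int]_n) : Prop := forall i, 0 <= dotv (al i) y.

(* Y^+ = Y n Tits cone *)
Definition Yp (y : 'rV[int]_n) : Prop :=
  exists (s : seq I) (v : 'rV[R]_n),
    (forall i, 0 <= dotv (emb R (al i)) v) /\ emb R y = actA s v.

Definition in_Worbit (lam mu : 'rV[int]_n) : Prop :=
  exists s : seq I, mu = actY s lam.

End KM.

(* A dominant [lam] satisfies [lam - w lam \in Q^vee_+] for every [w]: by induction on the length
   this reduces to the positivity of [w(alpha_i^vee)] when [l(w r_i) > l(w)], which in turn reduces,
   by splitting off the part of [w] lying in a parabolic subgroup of rank two, to a direct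
   computation in the dihedral groups (the invariant cone of the recurrence when [b c >= 4], the
   braid relations otherwise).
   Every element of [R_u(mu)] lies in [mu + Q^vee] and is a convex combination of points [x mu] with
   [l(x) <= l(u)].  So if [nu \in R_u(mu)], then [lam - nu \in Q^vee], and its height is the mean of
   the heights of the [lam - x mu] (the [alpha_i^vee] being free); hence some [x] with [l(x) <= l(u)]
   has [lam - x mu = q \in Q^vee_+] of height at most that of [lam - nu], and [mu = x^-1 (lam - q)]
   ranges over a finite set. *)

From HB Require Import structures.
From mathcomp Require Import all_boot all_order all_algebra.
From mathcomp Require Import zify ring.
From Stdlib Require Import Classical.
Import Order.TTheory GRing.Theory Num.Theory.
Local Open Scope ring_scope.
Set Implicit Arguments. Unset Strict Implicit. Unset Printing Implicit Defensive.

Section Linearity.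
Variables (R : realFieldType) (I : finType) (n : nat) (al av : I -> 'rV[int]_n).

Lemma dotvDr (K : comNzRingType) (x y z : 'rV[K]_n) :
  dotv x (y + z) = dotv x y + dotv x z.
Proof. by rewrite /dotv -big_split; apply: eq_bigr => k _; rewrite mxE mulrDr. Qed.

Lemma dotvZr (K : comNzRingType) (c : K) (x y : 'rV[K]_n) :
  dotv x (c *: y) = c * dotv x y.
Proof. by rewrite /dotv mulr_sumr; apply: eq_bigr => k _; rewrite mxE mulrCA. Qed.

Lemma dotvBr (K : comNzRingType) (x y z : 'rV[K]_n) :
  dotv x (y - z) = dotv x y - dotv x z.
Proof. by rewrite dotvDr -scaleN1r dotvZr mulN1r. Qed.

Lemma dotv0r (K : comNzRingType) (x : 'rV[K]_n) : dotv x 0 = 0.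
Proof. by rewrite /dotv big1 // => k _; rewrite mxE mulr0. Qed.

Lemma embD (y z : 'rV[int]_n) : emb R (y + z) = emb R y + emb R z.
Proof. by apply/rowP => k; rewrite !mxE rmorphD. Qed.

Lemma embB (y z : 'rV[int]_n) : emb R (y - z) = emb R y - emb R z.
Proof. by apply/rowP => k; rewrite !mxE rmorphB. Qed.

Lemma embZ (c : int) (y : 'rV[int]_n) : emb R (c *: y) = c%:~R *: emb R y.
Proof. by apply/rowP => k; rewrite !mxE rmorphM. Qed.

Lemma emb_sum (J : Type) (r : seq J) (F : J -> 'rV[int]_n) :
  emb R (\sum_(j <- r) F j) = \sum_(j <- r) emb R (F j).
Proof.
elim: r => [|j r IHr]; last by rewrite !big_cons embD IHr.
by rewrite !big_nil; apply/rowP => k; rewrite !mxE.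
Qed.

Lemma emb_inj : injective (@emb R n).
Proof. by move=> y z /rowP eq_yz; apply/rowP => k; move: (eq_yz k); rewrite !mxE => /intr_inj. Qed.

Lemma dotv_emb (x y : 'rV[int]_n) : dotv (emb R x) (emb R y) = (dotv x y)%:~R.
Proof. by rewrite /dotv rmorph_sum; apply: eq_bigr => k _; rewrite !mxE rmorphM. Qed.

Lemma rA_emb i y : rA al av i (emb R y) = emb R (rY al av i y).
Proof. by rewrite /rA /rY embB embZ dotv_emb. Qed.

Lemma actA_emb s y : actA al av s (emb R y) = emb R (actY al av s y).
Proof. by elim: s => [|i s IHs] //=; rewrite IHs rA_emb. Qed.

Lemma rYD i y z : rY al av i (y + z) = rY al av i y + rY al av i z.
Proof. by rewrite /rY dotvDr scalerDl opprD addrACA. Qed.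

Lemma rYZ i c y : rY al av i (c *: y) = c *: rY al av i y.
Proof. by rewrite /rY dotvZr scalerBr scalerA. Qed.

Lemma rAD i (y z : 'rV[R]_n) : rA al av i (y + z) = rA al av i y + rA al av i z.
Proof. by rewrite /rA dotvDr scalerDl opprD addrACA. Qed.

Lemma rAZ i (c : R) y : rA al av i (c *: y) = c *: rA al av i y.
Proof. by rewrite /rA dotvZr scalerBr scalerA. Qed.

Lemma actYD s y z : actY al av s (y + z) = actY al av s y + actY al av s z.
Proof. by elim: s => [|i s IHs] //=; rewrite IHs rYD. Qed.

Lemma actYZ s c y : actY al av s (c *: y) = c *: actY al av s y.
Proof. by elim: s => [|i s IHs] //=; rewrite IHs rYZ. Qed.

Lemma actY_cat s t y : actY al av (s ++ t) y = actY al av s (actY al av t y).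
Proof. exact: foldr_cat. Qed.

Lemma actA_cat s t (v : 'rV[R]_n) : actA al av (s ++ t) v = actA al av s (actA al av t v).
Proof. exact: foldr_cat. Qed.

End Linearity.

Section WeylWords.
Variables (R : realFieldType) (I : finType) (n : nat) (al av : I -> 'rV[int]_n).
Hypothesis pairing_diag : forall i, dotv (al i) (av i) = 2.

Lemma rY_inv i y : rY al av i (rY al av i y) = y.
Proof.
rewrite {1}/rY /rY dotvBr dotvZr pairing_diag.
by apply/rowP => k; rewrite !mxE; ring.
Qed.

Lemma rA_inv i (v : 'rV[R]_n) : rA al av i (rA al av i v) = v.
Proof.
rewrite {1}/rA /rA dotvBr dotvZr dotv_emb pairing_diag.
by apply/rowP => k; rewrite !mxE; ring.
Qed.

Lemma actY_rev s y : actY al av (rev s) (actY al av s y) = y.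
Proof.
elim: s y => [|i s IHs] y //=.
by rewrite rev_cons -cats1 actY_cat /= rY_inv IHs.
Qed.

Definition eqW (s t : seq I) := forall v : 'rV[R]_n, actA al av s v = actA al av t v.

Definition reduced (w : seq I) := forall t, eqW t w -> (size w <= size t)%N.

(* l(w r_i) >= |w|: for reduced [w], [i] is a right ascent of [w]. *)
Definition ascent (w : seq I) (i : I) := forall t, eqW t (rcons w i) -> (size w <= size t)%N.

Lemma eqW_actY s t y : eqW s t -> actY al av s y = actY al av t y.
Proof. by move=> st; apply: (@emb_inj R); rewrite -!actA_emb st. Qed.

Lemma eqW_sym s t : eqW s t -> eqW t s.
Proof. by move=> st v; rewrite st. Qed.

Lemma eqW_trans s t u : eqW s t -> eqW t u -> eqW s u.
Proof. by move=> st tu v; rewrite st tu. Qed.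

Lemma eqW_catl x s t : eqW s t -> eqW (x ++ s) (x ++ t).
Proof. by move=> st v; rewrite !actA_cat st. Qed.

Lemma eqW_catr x s t : eqW s t -> eqW (s ++ x) (t ++ x).
Proof. by move=> st v; rewrite !actA_cat st. Qed.

Lemma eqW_cancel x i z : eqW (rcons x i ++ i :: z) (x ++ z).
Proof. by move=> v; rewrite -cats1 -catA !actA_cat /= rA_inv. Qed.

Lemma eqW_rcons2 x i : eqW (rcons (rcons x i) i) x.
Proof. by have := eqW_cancel x i [::]; rewrite cats1 cats0. Qed.

Lemma reduced_rcons w i : reduced (rcons w i) -> reduced w.
Proof.
move=> red_wi t tw; have : eqW (rcons t i) (rcons w i) by rewrite -!cats1; apply: eqW_catr.
by move/red_wi; rewrite !size_rcons.
Qed.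

Lemma shorter_word (w w' : seq I) :
  ~ (forall t, eqW t w' -> (size w <= size t)%N) -> exists2 t, eqW t w' & (size t < size w)%N.
Proof.
move=> not_min; apply: NNPP => no_t; apply: not_min => t tw'.
by rewrite leqNgt; apply/negP => lt_tw; apply: no_t; exists t.
Qed.

Lemma reduced_exists s : exists2 t, eqW t s & reduced t.
Proof.
elim: {s}_.+1 {-2}s (ltnSn (size s)) => [|k IHk] s lt_sk //.
case: (classic (reduced s)) => [red_s | /shorter_word[t ts lt_ts]].
  by exists s => // v.
have [t' t't red_t'] := IHk t (leq_trans lt_ts lt_sk).
by exists t' => //; apply: eqW_trans t't ts.
Qed.

Lemma ascent_suffix v u w i :
  eqW (v ++ u) w -> (size v + size u = size w)%N -> ascent w i -> ascent u i.
Proof.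
move=> vu_w size_vu asc_w t tu.
have : eqW (v ++ t) (rcons w i).
  apply: eqW_trans (eqW_catl v tu) _.
  by rewrite -!cats1 catA; apply: eqW_catr.
by move/asc_w; rewrite size_cat -size_vu leq_add2l.
Qed.

Lemma reduced_prefix v u w :
  eqW (v ++ u) w -> (size v + size u = size w)%N -> reduced w -> reduced v.
Proof.
move=> vu_w size_vu red_w t tv.
have /red_w : eqW (t ++ u) w by apply: eqW_trans (eqW_catr _ tv) vu_w.
by rewrite size_cat -size_vu leq_add2r.
Qed.

Lemma reduced_suffix v u w :
  eqW (v ++ u) w -> (size v + size u = size w)%N -> reduced w -> reduced u.
Proof.
move=> vu_w size_vu red_w t tu.
have /red_w : eqW (v ++ t) w by apply: eqW_trans (eqW_catl _ tu) vu_w.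
by rewrite size_cat -size_vu leq_add2l.
Qed.

End WeylWords.

Fixpoint alt (T : Type) (k : nat) (x y : T) : seq T :=
  if k is k'.+1 then rcons (alt k' y x) x else [::].

Lemma size_alt (T : Type) k (x y : T) : size (alt k x y) = k.
Proof. by elim: k x y => //= k IHk x y; rewrite size_rcons IHk. Qed.

Lemma alt_S (T : Type) k (x y : T) : alt k.+1 x y = (if odd k then y else x) :: alt k x y.
Proof.
elim: k x y => [|k IHk] x y //.
by rewrite -[LHS]/(rcons (alt k.+1 y x) x) IHk rcons_cons /=; case: (odd k).
Qed.

Lemma alt_add (T : Type) j k (x y : T) :
  alt (j + k) x y = alt j (if odd k then y else x) (if odd k then x else y) ++ alt k x y.
Proof.
elim: k x y => [|k IHk] x y; first by rewrite addn0 cats0.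
by rewrite addnS /= IHk rcons_cat /=; case: (odd k).
Qed.

(* [r_s] ([flip = false]) or [r_s'] ([flip = true]) acting on [v + z.1 a_s + z.2 a_s'], with
   [a_s = alpha_s^vee], [b = alpha_s(a_s')], [c = alpha_s'(a_s)], [p = alpha_s(v)] and
   [q = alpha_s'(v)]. *)
Definition rank2_step (K : pzRingType) (b c : int) (p q : K) (flip : bool) (z : K * K) :=
  if flip then (z.1, - z.2 - q - c%:~R * z.1) else (- z.1 - p - b%:~R * z.2, z.2).

Fixpoint rank2_iter (K : pzRingType) (b c : int) (p q : K) (k : nat) (flip : bool) (z : K * K) :=
  if k is k'.+1 then rank2_iter b c p q k' (~~ flip) (rank2_step b c p q flip z) else z.

Definition rank2_root (b c : int) (k : nat) : int * int := rank2_iter b c 0 0 k true (1, 0).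

Definition rank2_cone (b c : int) (flip : bool) (z : int * int) :=
  [/\ 0 <= z.1, 0 <= z.2 & if flip then 2 * z.2 <= - c * z.1 else 2 * z.1 <= - b * z.2].

Lemma rank2_step_cone b c flip z : b <= 0 -> c <= 0 -> 4 <= b * c ->
  rank2_cone b c flip z -> rank2_cone b c (~~ flip) (rank2_step b c 0 0 flip z).
Proof.
case: z => x y; case: flip; rewrite /rank2_cone /rank2_step /= !subr0 !intz.
  by move=> b_le0 c_le0 bc_ge4 [x_ge0 y_ge0 le_yx]; split; nia.
by move=> b_le0 c_le0 bc_ge4 [x_ge0 y_ge0 le_xy]; split; nia.
Qed.

Lemma rank2_root_ge0_infinite b c k : b <= 0 -> c <= 0 -> 4 <= b * c ->
  0 <= (rank2_root b c k).1 /\ 0 <= (rank2_root b c k).2.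
Proof.
move=> b_le0 c_le0 bc_ge4; rewrite /rank2_root.
have : rank2_cone b c true (1, 0) by split => //=; lia.
elim: k true (1, 0) => [|k IHk] flip z; first by case.
by move/(rank2_step_cone b_le0 c_le0 bc_ge4); apply: IHk.
Qed.

(* The finite types A1xA1, A2, B2, G2: [m] is the order of [r_s r_s'], whence the braid relation. *)
Lemma rank2_finite b c : b <= 0 -> c <= 0 -> (b = 0 <-> c = 0) -> b * c < 4 ->
  exists m, [/\ (0 < m)%N,
    forall k, (k < m)%N ->
      0 <= (rank2_root b c k).1 /\ 0 <= (rank2_root b c k).2
  & forall (K : realFieldType) (p q : K),
      rank2_iter b c p q m false (0, 0) = rank2_iter b c p q m true (0, 0)].
Proof.
move=> b_le0 c_le0 [b0 c0] bc_lt4.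
have [b_ge c_ge] : -3 <= b /\ -3 <= c by nia.
have : (b = 0 /\ c = 0) \/ (b = -1 /\ c = -1) \/ (b = -1 /\ c = -2) \/ (b = -2 /\ c = -1)
       \/ (b = -1 /\ c = -3) \/ (b = -3 /\ c = -1) by nia.
case=> [[-> ->]|[[-> ->]|[[-> ->]|[[-> ->]|[[-> ->]|[-> ->]]]]]];
  [exists 2%N | exists 3%N | exists 4%N | exists 4%N | exists 6%N | exists 6%N];
  (split => //; [ case=> [|[|[|[|[|[|k]]]]]] //= _; rewrite /rank2_root /= ?intz; lia
                | by move=> K p q /=; congr pair; ring ]).
Qed.

Section RankTwo.
Variables (R : realFieldType) (I : finType) (n : nat) (al av : I -> 'rV[int]_n).
Hypothesis pairing_diag : forall i, dotv (al i) (av i) = 2.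
Variables s s' : I.

Local Notation eqW := (eqW R al av).
Local Notation reduced := (reduced R al av).
Local Notation ascent := (ascent R al av).

Let b := dotv (al s) (av s').
Let c := dotv (al s') (av s).

Lemma actY_alt k flip (z : int * int) :
  actY al av (alt k (if flip then s' else s) (if flip then s else s')) (z.1 *: av s + z.2 *: av s')
  = let z' := rank2_iter b c 0 0 k flip z in z'.1 *: av s + z'.2 *: av s'.
Proof.
elim: k flip z => [|k IHk] flip z //=.
rewrite -cats1 actY_cat /=.
have -> : rY al av (if flip then s' else s) (z.1 *: av s + z.2 *: av s')
          = let z' := rank2_step b c 0 0 flip z in z'.1 *: av s + z'.2 *: av s'.
  case: flip; rewrite /rY /rank2_step /= dotvDr !dotvZr !pairing_diag !subr0 !intz;
  by apply/rowP => k'; rewrite !mxE; ring.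
by have := IHk (~~ flip) (rank2_step b c 0 0 flip z); case: flip.
Qed.

Lemma actA_alt (v : 'rV[R]_n) k flip (z : R * R) :
  let p := dotv (emb R (al s)) v in let q := dotv (emb R (al s')) v in
  actA al av (alt k (if flip then s' else s) (if flip then s else s'))
    (v + z.1 *: emb R (av s) + z.2 *: emb R (av s'))
  = let z' := rank2_iter b c p q k flip z in v + z'.1 *: emb R (av s) + z'.2 *: emb R (av s').
Proof.
move=> p q; elim: k flip z => [|k IHk] flip z //=.
rewrite -cats1 actA_cat /=.
have -> : rA al av (if flip then s' else s) (v + z.1 *: emb R (av s) + z.2 *: emb R (av s'))
          = let z' := rank2_step b c p q flip z in
            v + z'.1 *: emb R (av s) + z'.2 *: emb R (av s').
  case: flip; rewrite /rA /rank2_step /= !dotvDr !dotvZr !dotv_emb !pairing_diag -/p -/q;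
  by apply/rowP => k'; rewrite !mxE; ring.
by have := IHk (~~ flip) (rank2_step b c p q flip z); case: flip.
Qed.

Lemma braid m :
  (forall p q : R, rank2_iter b c p q m false (0, 0) = rank2_iter b c p q m true (0, 0)) ->
  eqW (alt m s s') (alt m s' s).
Proof.
move=> iter_m v; have v0 : v = v + 0 *: emb R (av s) + 0 *: emb R (av s').
  by rewrite !scale0r !addr0.
by rewrite v0 (actA_alt v m false (0, 0)) (actA_alt v m true (0, 0)) /= iter_m.
Qed.

Lemma reduced_pair_word u : all (fun z => (z == s) || (z == s')) u -> reduced u ->
  u = [::] \/ exists k, u = alt k.+1 s s' \/ u = alt k.+1 s' s.
Proof.
elim/last_ind: u => [|u z IHu]; first by left.
rewrite all_rcons => /andP[z_pair u_pair] red_uz; right.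
have not_red k y : u <> alt k.+1 z y.
  move=> eq_u; move: red_uz; rewrite eq_u => /(_ _ (eqW_sym (eqW_rcons2 pairing_diag _ _))).
  by rewrite /= !size_rcons size_alt; lia.
case: (IHu u_pair (reduced_rcons red_uz)) => [->|[k [eq_u|eq_u]]].
- by case/orP: z_pair => /eqP ->; exists 0%N; [left|right].
- case/orP: z_pair => /eqP ez; first by case: (not_red k s'); rewrite ez.
  by exists k.+1; right; rewrite eq_u ez.
- case/orP: z_pair => /eqP ez; last by case: (not_red k s); rewrite ez.
  by exists k.+1; left; rewrite eq_u ez.
Qed.

Lemma braid_not_ascent m K : (0 < m)%N -> (m <= K)%N -> eqW (alt m s s') (alt m s' s) ->
  ~ ascent (alt K s' s) s.
Proof.
case: m => // m _ le_mK braid_m asc.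
have [j eq_K] : exists j, K = (j + m.+1)%N by exists (K - m.+1)%N; rewrite subnK.
set z1 := if odd m.+1 then s' else s; set z2 := if odd m.+1 then s else s'.
have eq_z1 : (if odd m then s else s') = z1 by rewrite /z1 /=; case: (odd m).
have : eqW (alt j z2 z1 ++ alt m s' s) (rcons (alt K s' s) s).
  have -> : rcons (alt K s' s) s = rcons (alt j z2 z1) z1 ++ alt m.+1 s s'.
    by rewrite -[rcons _ s]/(alt K.+1 s s') eq_K -addSn alt_add.
  apply: eqW_trans (eqW_catl _ (eqW_sym braid_m)).
  by rewrite alt_S eq_z1; apply: eqW_sym; apply: eqW_cancel.
by move/asc; rewrite size_cat !size_alt eq_K; lia.
Qed.

Hypotheses (b_le0 : b <= 0) (c_le0 : c <= 0) (bc_eq0 : b = 0 <-> c = 0).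

Lemma dihedral_root_ge0 u : all (fun z => (z == s) || (z == s')) u -> reduced u -> ascent u s ->
  exists x y : int, [/\ 0 <= x, 0 <= y & actY al av u (av s) = x *: av s + y *: av s'].
Proof.
move=> u_pair red_u asc_u.
case: (reduced_pair_word u_pair red_u) asc_u => [->|[k [->|->]]] asc_u.
- by exists 1, 0; rewrite scale1r scale0r addr0.
- have := asc_u _ (eqW_sym (eqW_rcons2 pairing_diag _ _)).
  by rewrite /= size_rcons !size_alt ltnn.
have -> : actY al av (alt k.+1 s' s) (av s)
          = let z := rank2_root b c k.+1 in z.1 *: av s + z.2 *: av s'.
  by rewrite -actY_alt /= scale1r scale0r addr0.
suff [x_ge0 y_ge0] : 0 <= (rank2_root b c k.+1).1 /\ 0 <= (rank2_root b c k.+1).2.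
  by exists (rank2_root b c k.+1).1, (rank2_root b c k.+1).2.
have [bc_ge4|bc_lt4] := lerP 4 (b * c); first exact: rank2_root_ge0_infinite.
have [m [m_gt0 root_ge0 iter_m]] := rank2_finite b_le0 c_le0 bc_eq0 bc_lt4.
have [lt_km|le_mk] := ltnP k.+1 m; first exact: root_ge0.
case: (braid_not_ascent m_gt0 le_mk (braid (iter_m R))) => t t_eq.
by have := asc_u t t_eq; rewrite size_alt.
Qed.

End RankTwo.

Section PositiveCone.
Variables (I : finType) (n : nat) (av : I -> 'rV[int]_n).

Definition inQvp (y : 'rV[int]_n) :=
  exists2 c : I -> int, forall i, 0 <= c i & y = \sum_i c i *: av i.

Lemma inQvp0 : inQvp 0.
Proof. by exists (fun=> 0) => //; rewrite big1 // => i _; rewrite scale0r. Qed.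

Lemma inQvpD y z : inQvp y -> inQvp z -> inQvp (y + z).
Proof.
move=> [c c_ge0 ->] [d d_ge0 ->]; exists (fun i => c i + d i) => [i|].
  exact: addr_ge0.
by rewrite -big_split; apply: eq_bigr => i _; rewrite scalerDl.
Qed.

Lemma inQvpZ x y : 0 <= x -> inQvp y -> inQvp (x *: y).
Proof.
move=> x_ge0 [c c_ge0 ->]; exists (fun i => x * c i) => [i|]; first exact: mulr_ge0.
by rewrite scaler_sumr; apply: eq_bigr => i _; rewrite scalerA.
Qed.

Lemma inQvp_av i : inQvp (av i).
Proof.
exists (fun j => (j == i)%:R) => [j|]; first by case: (j == i).
rewrite (bigD1 i) //= eqxx scale1r big1 ?addr0 // => j /negbTE ->.
by rewrite scale0r.
Qed.

End PositiveCone.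

Section PositiveRoots.
Variables (R : realFieldType) (I : finType) (n : nat) (al av : I -> 'rV[int]_n).
Hypothesis GCM : is_GCM (fun i j => dotv (al j) (av i)).

Local Notation eqW := (eqW R al av).
Local Notation reduced := (reduced R al av).
Local Notation ascent := (ascent R al av).

Lemma pairing_diag i : dotv (al i) (av i) = 2.
Proof. by case: GCM. Qed.

Lemma pairing_le0 i j : i != j -> dotv (al i) (av j) <= 0.
Proof. by case: GCM => _ [le0 _] ij; apply: le0; rewrite eq_sym. Qed.

Lemma pairing_eq0_sym i j : dotv (al i) (av j) = 0 <-> dotv (al j) (av i) = 0.
Proof. by case: GCM => _ [_ eq0]; split => /eq0. Qed.

(* Move right descents of [v0] in [{s, s'}] into [u0] until none is left. *)
Lemma parabolic_split s s' w v0 u0 : reduced w -> eqW (v0 ++ u0) w ->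
  (size v0 + size u0 <= size w)%N -> all (fun z => (z == s) || (z == s')) u0 ->
  exists v u, [/\ eqW (v ++ u) w, (size v + size u = size w)%N, (size v <= size v0)%N,
    all (fun z => (z == s) || (z == s')) u & ascent v s /\ ascent v s'].
Proof.
move=> red_w.
elim: {v0}_.+1 {-2}v0 (ltnSn (size v0)) u0 => [|k IHk] v0 lt_v0k u0 // vu_w size_vu u0_pair.
case: (classic (exists2 z, (z == s) || (z == s') & ~ ascent v0 z)).
  case=> z z_pair /shorter_word[t tz lt_tv0].
  have tzu_w : eqW (t ++ z :: u0) w.
    exact: eqW_trans (eqW_trans (eqW_catr _ tz) (eqW_cancel pairing_diag _ _ _)) vu_w.
  have [|||v [u [vu' size' le_vt u_pair asc]]] := IHk t _ (z :: u0) tzu_w.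
  - exact: leq_trans lt_tv0 lt_v0k.
  - by apply: leq_trans size_vu; rewrite /= addnS -addSn leq_add2r.
  - by rewrite /= z_pair.
  by exists v, u; split => //; apply: leq_trans le_vt (ltnW lt_tv0).
move=> no_descent; exists v0, u0; split => //.
- by apply/eqP; rewrite eqn_leq size_vu -size_cat red_w.
- by split; apply: NNPP => not_asc; apply: no_descent;
    [exists s; rewrite ?eqxx | exists s'; rewrite ?eqxx ?orbT].
Qed.

Lemma ascent_root_ge0 w i : reduced w -> ascent w i -> inQvp av (actY al av w (av i)).
Proof.
elim: {w}_.+1 {-2}w (ltnSn (size w)) i => [|k IHk] w lt_wk i // red_w asc_w.
case/lastP: w lt_wk red_w asc_w => [|w0 s'] lt_wk red_w asc_w; first exact: inQvp_av.
have is' : i != s'.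
  apply/eqP => eq_is'; move: asc_w; rewrite eq_is'.
  by move/(_ _ (eqW_sym (eqW_rcons2 pairing_diag w0 s'))); rewrite size_rcons ltnn.
have w_split : eqW (w0 ++ [:: s']) (rcons w0 s') by rewrite cats1.
have [||v [u [vu_w size_vu le_vw0 u_pair [asc_vi asc_vs']]]] :=
  parabolic_split (s := i) (s' := s') red_w w_split.
- by rewrite size_rcons addn1.
- by rewrite /= eqxx orbT.
have red_v := reduced_prefix vu_w size_vu red_w.
have s'i : s' != i by rewrite eq_sym.
have [x [y [x_ge0 y_ge0 u_i]]] := dihedral_root_ge0 pairing_diag (@pairing_le0 i s' is')
  (@pairing_le0 s' i s'i) (pairing_eq0_sym i s') u_pair
  (reduced_suffix vu_w size_vu red_w) (ascent_suffix vu_w size_vu asc_w).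
have lt_vk : (size v < k)%N by apply: leq_ltn_trans le_vw0 _; rewrite -ltnS -(size_rcons w0 s').
rewrite -(eqW_actY _ vu_w) actY_cat u_i actYD !actYZ.
by apply: inQvpD; apply: inQvpZ => //; apply: IHk.
Qed.

Lemma dominant_sub_orbit lam s : Ypp al lam -> inQvp av (lam - actY al av s lam).
Proof.
move=> lam_dom; have [t ts red_t] := reduced_exists R al av s.
rewrite -(eqW_actY _ ts); elim/last_ind: t red_t {ts} => [|t i IHt] red_ti.
  by rewrite subrr; apply: inQvp0.
have red_t := reduced_rcons red_ti.
rewrite -cats1 actY_cat /= /rY -scaleNr actYD actYZ scaleNr opprD opprK addrA.
apply: inQvpD; first exact: IHt.
apply: inQvpZ; first exact: lam_dom.
apply: ascent_root_ge0 => // t' t'_eq.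
by have := red_ti _ t'_eq; rewrite size_rcons => /ltnW.
Qed.

End PositiveRoots.

Section RealFreeness.
Variables (I : finType) (n : nat) (av : I -> 'rV[int]_n).
Hypothesis av_free : free_family av.

Lemma sum_enum (V : nmodType) (F : I -> V) : \sum_i F i = \sum_(k < #|I|) F (enum_val k).
Proof. by rewrite -big_enum_val; apply: eq_bigl => i; rewrite inE. Qed.

Definition coroot_mx : 'M[int]_(#|I|, n) := \matrix_(k, j) av (enum_val k) 0 j.

(* Clearing denominators reduces a rational relation between the rows to an integral one. *)
Lemma coroot_mx_rat_free (y : 'rV[rat]_#|I|) :
  y *m map_mx (fun z : int => z%:~R) coroot_mx = 0 -> y = 0.
Proof.
move=> y_rel.
pose D : int := \prod_k denq (y 0 k).
have D_neq0 : D != 0 by apply/prodf_neq0 => k _; rewrite gt_eqF ?denq_gt0.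
pose c i : int := numq (y 0 (enum_rank i)) * \prod_(k | k != enum_rank i) denq (y 0 k).
have cE i : (c i)%:~R = y 0 (enum_rank i) * D%:~R :> rat.
  by rewrite /c /D [in RHS](bigD1 (enum_rank i)) //= !intrM numqE -mulrA.
have c_rel : \sum_i c i *: av i = 0.
  apply/rowP => j; rewrite summxE mxE; apply: (@intr_inj rat).
  rewrite rmorph_sum rmorph0 /=.
  have := congr1 (fun M : 'rV[rat]_n => M 0 j) y_rel; rewrite !mxE => y_rel_j.
  transitivity (D%:~R * \sum_k y 0 k * (coroot_mx k j)%:~R).
    rewrite mulr_sumr sum_enum; apply: eq_bigr => k _.
    by rewrite mxE intrM cE enum_valK mxE; ring.
  rewrite -[RHS](mulr0 D%:~R); congr (_ * _); apply: etrans y_rel_j.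
  by apply: eq_bigr => k _; rewrite [in RHS]mxE.
apply/rowP => k; rewrite mxE.
have /(congr1 (fun z : int => z%:~R : rat)) := av_free c_rel (enum_val k).
rewrite cE enum_valK rmorph0 => /eqP; rewrite mulf_eq0 intr_eq0 (negbTE D_neq0) orbF.
by move/eqP.
Qed.

Lemma free_family_emb (R : realFieldType) (c : I -> R) :
  \sum_i c i *: emb R (av i) = 0 -> forall i, c i = 0.
Proof.
move=> c_rel.
have free_R : row_free (map_mx (fun z : int => z%:~R : R) coroot_mx).
  have -> : map_mx (fun z : int => z%:~R : R) coroot_mx
      = map_mx ratr (map_mx (fun z : int => z%:~R : rat) coroot_mx).
    by apply/matrixP => i j; rewrite !mxE ratr_int.
  rewrite /row_free mxrank_map -/(row_free _) -kermx_eq0; apply/eqP/row_matrixP => k.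
  by rewrite row0; apply: coroot_mx_rat_free; rewrite -row_mul mulmx_ker row0.
pose x : 'rV[R]_#|I| := \row_k c (enum_val k).
have : x *m map_mx (fun z : int => z%:~R : R) coroot_mx
       = 0 *m map_mx (fun z : int => z%:~R : R) coroot_mx.
  rewrite mul0mx -c_rel; apply/rowP => j; rewrite !mxE summxE sum_enum.
  by apply: eq_bigr => k _; rewrite !mxE.
move/(row_free_inj free_R)/rowP => x0 i.
by have := x0 (enum_rank i); rewrite !mxE enum_rankK.
Qed.

End RealFreeness.

Section OrbitCombinations.
Variables (R : realFieldType) (I : finType) (n : nat) (al av : I -> 'rV[int]_n).
Variable mu : 'rV[int]_n.

Definition orbit_comb (m : nat) (t : R) (x : 'rV[R]_n) :=
  exists l : seq (R * seq I), [/\ all (fun p => (0 <= p.1) && (size p.2 <= m)%N) l,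
    \sum_(p <- l) p.1 = t & x = \sum_(p <- l) p.1 *: emb R (actY al av p.2 mu)].

Lemma orbit_comb0 m : orbit_comb m 0 0.
Proof. by exists [::]; rewrite !big_nil. Qed.

Lemma orbit_combD m t t' x x' :
  orbit_comb m t x -> orbit_comb m t' x' -> orbit_comb m (t + t') (x + x').
Proof.
move=> [l [l_ok <- ->]] [l' [l'_ok <- ->]].
by exists (l ++ l'); rewrite all_cat l_ok l'_ok !big_cat.
Qed.

Lemma orbit_combZ m c t x : 0 <= c -> orbit_comb m t x -> orbit_comb m (c * t) (c *: x).
Proof.
move=> c_ge0 [l [l_ok <- ->]]; exists [seq (c * p.1, p.2) | p <- l]; split.
- rewrite all_map; apply/allP => p /(allP l_ok) /andP[p_ge0 p_size] /=.
  by rewrite mulr_ge0.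
- by rewrite big_map mulr_sumr.
- by rewrite big_map scaler_sumr; apply: eq_bigr => p _; rewrite scalerA.
Qed.

Lemma orbit_comb_widen m m' t x : (m <= m')%N -> orbit_comb m t x -> orbit_comb m' t x.
Proof.
move=> le_mm' [l [l_ok t_eq x_eq]]; exists l; split => //.
apply/allP => p /(allP l_ok) /andP[-> p_size]; exact: leq_trans p_size le_mm'.
Qed.

Lemma orbit_comb_rA m i t x : orbit_comb m t x -> orbit_comb m.+1 t (rA al av i x).
Proof.
move=> [l [l_ok <- ->]]; exists [seq (p.1, i :: p.2) | p <- l]; split.
- by rewrite all_map; apply/allP => p /(allP l_ok) /andP[p_ge0 p_size] /=; rewrite p_ge0.
- by rewrite big_map.
rewrite big_map; elim: l {l_ok} => [|p l IHl].
  by rewrite !big_nil /rA dotv0r scale0r subr0.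
by rewrite !big_cons rAD rAZ IHl /= rA_emb.
Qed.

Lemma conv_orbit_comb m (S : 'rV[R]_n -> Prop) x :
  (forall y, S y -> orbit_comb m 1 y) -> conv S x -> orbit_comb m 1 x.
Proof.
move=> S_comb [k [p [w [Sp [w_ge0 [<- ->]]]]]].
apply: (big_rec2 (fun t y => orbit_comb m t y)); first exact: orbit_comb0.
move=> j t y _ comb_ty; apply: orbit_combD => //.
by rewrite -[X in orbit_comb _ X]mulr1; apply: orbit_combZ; [apply: w_ge0 | apply: S_comb].
Qed.

Lemma Rword_orbit_comb s y : Rword R al av s (fun z => z = mu) y -> orbit_comb (size s) 1 (emb R y).
Proof.
elim: s y => [|i s IHs] y /=.
  move=> ->; exists [:: (1, [::])].
  by rewrite /= !big_cons !big_nil /= ler01 scale1r !addr0.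
case=> y_conv _; apply: conv_orbit_comb y_conv => x [e [[Ee|[e' [Ee' ->]]] ->]].
  exact: orbit_comb_widen (leqnSn _) (IHs e Ee).
by rewrite -rA_emb; apply: orbit_comb_rA; apply: IHs.
Qed.

Lemma Rword_subQv s y : Rword R al av s (fun z => z = mu) y -> inQv av (y - mu).
Proof.
elim: s y => [|i s IHs] y /=.
  by move=> ->; exists (fun=> 0); rewrite subrr big1 // => i _; rewrite scale0r.
case=> _ [e [q [Ee [[d q_eq] ->]]]]; have [c e_eq] := IHs e Ee.
exists (fun i => c i + d i); rewrite addrAC e_eq q_eq -big_split.
by apply: eq_bigr => j _; rewrite scalerDl.
Qed.

End OrbitCombinations.

Section Heights.
Variables (R : realFieldType) (I : finType) (n : nat) (av : I -> 'rV[int]_n).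
Hypothesis av_free : free_family av.

Lemma comb_height_ge (K : int) (lp : seq (R * seq I)) (F : seq I -> 'rV[int]_n) :
  (forall p, p \in lp ->
     0 <= p.1 /\ exists2 c : I -> int, F p.2 = \sum_i c i *: av i & K <= \sum_i c i) ->
  exists2 D : I -> R, \sum_(p <- lp) p.1 *: emb R (F p.2) = \sum_i D i *: emb R (av i)
    & (\sum_(p <- lp) p.1) * K%:~R <= \sum_i D i.
Proof.
elim: lp => [|p lp IHlp] lp_ok.
  exists (fun=> 0); last by rewrite big_nil mul0r big1.
  by rewrite big_nil big1 // => i _; rewrite scale0r.
have [p_ge0 [c Fp le_Kc]] := lp_ok p (mem_head _ _).
have [D lp_eq le_KD] := IHlp (fun q q_lp => lp_ok q (mem_behead (s := p :: lp) q_lp)).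
exists (fun i => p.1 * (c i)%:~R + D i).
  rewrite big_cons lp_eq Fp emb_sum scaler_sumr -big_split; apply: eq_bigr => i _.
  by rewrite embZ scalerA scalerDl.
rewrite big_cons big_split /= -mulr_sumr mulrDl lerD // ler_wpM2l //.
by rewrite -rmorph_sum ler_int.
Qed.

(* By freeness the height of the combination is the weighted mean of the heights of the [F p.2]. *)
Lemma exists_low_height (lp : seq (R * seq I)) (F : seq I -> 'rV[int]_n) (d : I -> int) :
  all (fun p => 0 <= p.1) lp -> \sum_(p <- lp) p.1 = 1 ->
  (forall p, p \in lp -> inQvp av (F p.2)) ->
  \sum_(p <- lp) p.1 *: emb R (F p.2) = \sum_i (d i)%:~R *: emb R (av i) ->
  exists2 p, p \in lp & exists2 c : I -> int,
    (forall i, 0 <= c i) /\ F p.2 = \sum_i c i *: av i & \sum_i c i <= \sum_i d i.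
Proof.
move=> lp_ge0 lp_sum1 lp_Qvp lp_eq; apply: NNPP => no_low.
have high p : p \in lp -> 0 <= p.1 /\
    exists2 c : I -> int, F p.2 = \sum_i c i *: av i & \sum_i d i + 1 <= \sum_i c i.
  move=> p_lp; split; first exact: (allP lp_ge0).
  have [c c_ge0 Fp] := lp_Qvp p p_lp; exists c => //.
  by rewrite lezD1 ltNge; apply/negP => le_cd; apply: no_low; exists p => //; exists c.
have [D lp_D le_D] := comb_height_ge high.
have D_eq i : D i = (d i)%:~R.
  apply/eqP; rewrite -subr_eq0; apply/eqP; move: i; apply: (free_family_emb av_free).
  by under eq_bigr do rewrite scalerBl; rewrite sumrB -lp_D lp_eq subrr.
move: le_D; rewrite lp_sum1 mul1r (eq_bigr _ (fun i _ => D_eq i)) -rmorph_sum ler_int.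
by rewrite lezD1 ltxx.
Qed.

End Heights.

Section Finiteness.
Variables (R : realFieldType) (I : finType) (n : nat) (al av : I -> 'rV[int]_n).
Hypothesis GCM : is_GCM (fun i j => dotv (al j) (av i)).
Hypothesis av_free : free_family av.
Variable lam : 'rV[int]_n.
Hypothesis lam_dom : Ypp al lam.

Lemma Rword_orbit_subQv mu s nu : in_Worbit al av lam mu ->
  Rword R al av s (fun z => z = mu) nu -> inQv av (lam - nu).
Proof.
move=> [w ->] nu_Rw; have [c c_ge0 lam_w] := dominant_sub_orbit R GCM w lam_dom.
have [q nu_q] := Rword_subQv nu_Rw; exists (fun i => c i - q i).
have -> : lam - nu = (lam - actY al av w lam) - (nu - actY al av w lam).
  by rewrite opprB addrA subrK.
rewrite lam_w nu_q -sumrB.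
by apply: eq_bigr => i _; rewrite scalerBl.
Qed.

Lemma Rword_low_word mu s nu (d : I -> int) : in_Worbit al av lam mu ->
  Rword R al av s (fun z => z = mu) nu -> lam - nu = \sum_i d i *: av i ->
  exists x (c : I -> int), [/\ (size x <= size s)%N, forall i, 0 <= c i,
    \sum_i c i <= \sum_i d i & lam - actY al av x mu = \sum_i c i *: av i].
Proof.
move=> [w mu_eq] nu_Rw lam_nu.
have [lp [lp_ok lp_sum1 nu_eq]] := Rword_orbit_comb nu_Rw.
have [||||p p_lp [c [c_ge0 lam_p] le_cd]] :=
  @exists_low_height R _ _ av av_free lp (fun x => lam - actY al av x mu) d.
- by apply/allP => p /(allP lp_ok) /andP[].
- exact: lp_sum1.
- by move=> p _; rewrite mu_eq -actY_cat; apply: dominant_sub_orbit.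
- under eq_bigr do rewrite embB scalerBr.
  rewrite sumrB -scaler_suml lp_sum1 scale1r -nu_eq -embB lam_nu emb_sum.
  by apply: eq_bigr => i _; rewrite embZ.
exists p.2, c; split => //.
by have /andP[] := allP lp_ok p p_lp.
Qed.

End Finiteness.

Fixpoint words_upto (I : finType) (L : nat) : seq (seq I) :=
  if L is L'.+1 then [::] :: [seq i :: w | i <- enum I, w <- words_upto I L'] else [:: [::]].

Lemma mem_words_upto (I : finType) L (x : seq I) : (size x <= L)%N -> x \in words_upto I L.
Proof.
elim: L x => [|L IHL] [|i x] //= le_xL.
by rewrite in_cons; apply/orP; right; apply: allpairs_f; [rewrite mem_enum | apply: IHL].
Qed.

Section Candidates.
Variables (I : finType) (n : nat) (al av : I -> 'rV[int]_n).

Definition candidates (lam : 'rV[int]_n) (L N : nat) : seq 'rV[int]_n :=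
  [seq actY al av (rev x) (lam - \sum_i (f i : nat)%:Z *: av i)
     | x : seq I <- words_upto I L, f : {ffun I -> 'I_N.+1} <- enum {ffun I -> 'I_N.+1}].

Lemma mem_candidates lam L N x (c : I -> int) : (size x <= L)%N -> (forall i, 0 <= c i <= N%:Z) ->
  actY al av (rev x) (lam - \sum_i c i *: av i) \in candidates lam L N.
Proof.
move=> le_xL c_bnd; pose f := [ffun i => inord `|c i|%N : 'I_N.+1].
have fE i : (f i : nat)%:Z = c i.
  have /andP[c_ge0 c_le] := c_bnd i.
  by rewrite ffunE inordK ?gez0_abs //; rewrite ltnS; lia.
under eq_bigr do rewrite -fE.
by apply: allpairs_f; [apply: mem_words_upto | rewrite mem_enum].
Qed.

End Candidates.

Theorem mainTheorem10 (R : realFieldType) (I : finType) (n : nat)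
    (a : I -> I -> int) (al av : I -> 'rV[int]_n) :
  is_GCM a ->
  free_family av ->
  (forall i j, dotv (al j) (av i) = a i j) ->
  forall (lam nu : 'rV[int]_n) (u : seq I),
    Ypp al lam ->
    Yp R al av nu ->
    exists l : seq 'rV[int]_n,
      forall mu, in_Worbit al av lam mu -> Rw R al av u mu nu -> mu \in l.
Proof.
move=> [a_diag [a_le0 a_eq0]] av_free al_av lam nu u lam_dom _.
have GCM : is_GCM (fun i j => dotv (al j) (av i)).
  by split; [|split] => *; rewrite ?al_av; auto.
case: (classic (inQv av (lam - nu))) => [[d lam_nu] | not_Qv]; last first.
  by exists [::] => mu mu_orb [s [_ nu_Rw]]; case: not_Qv; apply: Rword_orbit_subQv nu_Rw.
exists (candidates al av lam (size u) (absz (\sum_i d i))) => mu mu_orb [s [[_ s_min] nu_Rw]].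
have [x [c [le_xs c_ge0 le_cd lam_x]]] := Rword_low_word GCM av_free lam_dom mu_orb nu_Rw lam_nu.
have -> : mu = actY al av (rev x) (lam - \sum_i c i *: av i).
  by rewrite -lam_x opprB addrC subrK actY_rev //; apply: pairing_diag.
apply: mem_candidates => [|i]; first exact: leq_trans le_xs (s_min u (fun=> erefl)).
rewrite c_ge0 abszE /=; apply: le_trans (le_trans le_cd (ler_norm _)).
by rewrite (bigD1 i) //= lerDl sumr_ge0.
Qed.
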